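(* Let $\mathcal{S}\subseteq\mathcal{L}$, $\phi\in\mathcal{L}$, and let $\mathcal{AF}_{\vdash}=(\vdash,\overline{\cdot},\mathsf{id})$ be contrapositable with $\vdash$ satisfying Cut. If there is a $\Theta\subseteq\bigcap\mathsf{MCS}(\mathcal{AF}_{\vdash}(\mathcal{S}))$ with $\Theta\vdash\phi$, then $\bigcap\mathsf{MCS}(\mathcal{AF}_{\vdash}(\mathcal{S}))=\bigcap\mathsf{MCS}(\mathcal{AF}_{\vdash^{+\phi}}(\mathcal{S}))$.
   Context: $\mathcal{L}$ is a set of formulas; ${\vdash}\subseteq\wp_{\sf fin}(\mathcal{L})\times\mathcal{L}$ is arbitrary and $\overline{\cdot}:\mathcal{L}\to\wp(\mathcal{L})$. $\vdash^{+\phi}$ is the transitive closure of ${\vdash}\cup\{(\emptyset,\phi)\}$. Cut: for every $\phi$ and finite $\Gamma,\Delta$, if $\Gamma\vdash\phi$ and $\Delta\vdash^{+\phi}\gamma$ then $\Gamma\cup\Delta\vdash\gamma$. Contrapositable: for all finite $\Theta$, if $\Theta\vdash\gamma'$ with $\gamma'\in\overline{\gamma}$, then for every $\sigma\in\Theta$, $(\Theta\cup\{\gamma\})\setminus\{\sigma\}\vdash\sigma'$ for some $\sigma'\in\overline{\sigma}$. For a relation $\vdash'$ (here $\vdash$ or $\vdash^{+\phi}$), $\Theta\subseteq\mathcal{S}$ is $\mathcal{AF}_{\vdash'}(\mathcal{S})$-inconsistent iff there are $\Theta'\subseteq\Theta$ and $\gamma\in\Theta'$ with $\Theta'\setminus\{\gamma\}\vdash'\gamma'$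 for some $\gamma'\in\overline{\gamma}$, consistent otherwise; $\mathsf{MCS}(\mathcal{AF}_{\vdash'}(\mathcal{S}))$ is the set of maximal consistent subsets of $\mathcal{S}$ (consistent with no consistent proper superset within $\mathcal{S}$). *)

From Stdlib Require Import List.

Set Implicit Arguments.

Definition lset (L : Type) := L -> Prop.

Definition finite {L : Type} (A : lset L) : Prop :=
  exists l : list L, forall x, A x <-> In x l.

Definition sub {L : Type} (A B : lset L) : Prop := forall x, A x -> B x.
Definition emptyset {L : Type} : lset L := fun _ => False.
Definition union {L : Type} (A B : lset L) : lset L := fun x => A x \/ B x.
Definition single {L : Type} (a : L) : lset L := fun x => x = a.
Definition minus1 {L : Type} (A : lset L) (a : L) : lset L :=
  fun x => A x /\ x <> a.

(* A derivability relation  |-  subset of P_fin(L) x L.  It is given as a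
   predicate on all sets, but only its values on finite sets are ever used. *)
Definition drel (L : Type) := lset L -> L -> Prop.

(* |-^{+phi}: transitive closure of  |-  ∪ {(∅, phi)}, i.e. the closure of
   the finite pairs of  |-  and of (∅, phi) under (single-premise) chaining:
   if Δ ⊢ γ, δ ∈ Δ and Γ ⊢ δ then (Δ \ {δ}) ∪ Γ ⊢ γ. *)
Inductive plus_phi {L : Type} (D : drel L) (phi : L) : lset L -> L -> Prop :=
  | pp_base : forall G g, finite G -> D G g -> plus_phi D phi G g
  | pp_phi : plus_phi D phi emptyset phi
  | pp_trans : forall Dl g d G,
      plus_phi D phi Dl g -> Dl d -> plus_phi D phi G d ->
      plus_phi D phi (union (minus1 Dl d) G) g.

Definition Cut {L : Type} (D : drel L) : Prop :=
  forall (phi : L) (G Dl : lset L) (g : L),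
    finite G -> finite Dl -> D G phi -> plus_phi D phi Dl g ->
    D (union G Dl) g.

Definition contrapositable {L : Type} (D : drel L) (bar : L -> lset L) : Prop :=
  forall (Th : lset L) (g g' : L),
    finite Th -> D Th g' -> bar g g' ->
    forall s, Th s ->
      exists s', bar s s' /\ D (minus1 (union Th (single g)) s) s'.

(* AF_{D'}(S)-inconsistency of Θ ⊆ S (the assumption set is id, i.e. S). *)
Definition inconsistent {L : Type} (D' : drel L) (bar : L -> lset L)
    (Th : lset L) : Prop :=
  exists (Th' : lset L) (g g' : L),
    finite Th' /\ sub Th' Th /\ Th' g /\ bar g g' /\ D' (minus1 Th' g) g'.

Definition consistent {L : Type} (D' : drel L) (bar : L -> lset L)
    (Th : lset L) : Prop := ~ inconsistent D' bar Th.

Definition MCS {L : Type} (D' : drel L) (bar : L -> lset L) (S : lset L)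
    (E : lset L) : Prop :=
  sub E S /\ consistent D' bar E /\
  forall E', sub E E' -> sub E' S -> consistent D' bar E' -> sub E' E.

Definition capMCS {L : Type} (D' : drel L) (bar : L -> lset L) (S : lset L)
    : lset L :=
  fun x => forall E, MCS D' bar S E -> E x.

(* Θ lies in every |- -MCS, so by Cut and contraposition every |- -MCS is
   |-^{+φ}-consistent, hence a |-^{+φ}-MCS.  Conversely a |-^{+φ}-MCS is
   |- -consistent because |- ⊆ |-^{+φ}; a |- -consistent extension of it lies
   in a |- -MCS (Zorn), which is |-^{+φ}-consistent and so cannot be larger. *)

From Stdlib Require Import List Classical FunctionalExtensionality PropExtensionality.
From mathcomp Require classical_sets.
Set Implicit Arguments.

Section FiniteSets.
Context {T : Type}.

Lemma lset_ext (A B : lset T) : (forall x, A x <-> B x) -> A = B.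
Proof.
  intro H; apply functional_extensionality; intro x.
  apply propositional_extensionality; apply H.
Qed.

Lemma minus1_union_single (A : lset T) (a : T) :
  ~ A a -> minus1 (union A (single a)) a = A.
Proof.
  intro Ha; apply lset_ext; intro x; unfold minus1, union, single.
  split; [tauto|]. intro Hx; split; [tauto|]. intros ->; contradiction.
Qed.

Lemma finite_union (A B : lset T) : finite A -> finite B -> finite (union A B).
Proof.
  intros [lA HA] [lB HB]; exists (lA ++ lB); intro x.
  rewrite in_app_iff, <- HA, <- HB; reflexivity.
Qed.

Lemma finite_single (a : T) : finite (single a).
Proof. exists (a :: nil); intro x; simpl; unfold single; intuition. Qed.

Lemma finite_sub (A B : lset T) : sub A B -> finite B -> finite A.
Proof.
  intros HAB [l Hl].
  assert (Hfilter : exists l', forall x, In x l' <-> In x l /\ A x).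
  { clear Hl; induction l as [|b l [l' Hl']].
    - exists nil; simpl; tauto.
    - destruct (classic (A b)) as [Hb|Hb].
      + exists (b :: l'); intro x; simpl; rewrite Hl'.
        split; [intros [<-|]; tauto|intros [[<-|] ?]; tauto].
      + exists l'; intro x; simpl; rewrite Hl'.
        split; [tauto|intros [[<-|] ?]; tauto]. }
  destruct Hfilter as [l' Hl']; exists l'; intro x.
  rewrite Hl', <- Hl; split; [intro Hx; split; auto|tauto].
Qed.

Lemma finite_minus1 (A : lset T) (a : T) : finite A -> finite (minus1 A a).
Proof. apply finite_sub; intros x []; assumption. Qed.

Lemma finite_sub_union_chain (B : lset T) (F : lset (lset T)) (K : lset T) :
  classical_sets.total_on F sub -> finite K ->
  sub K (union B (classical_sets.bigcup F (fun X => X))) ->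
  sub K B \/ exists X, F X /\ sub K (union B X).
Proof.
  intros HF [l Hl] HK.
  assert (Hl' : forall x, In x l -> union B (classical_sets.bigcup F (fun X => X)) x)
    by (intros x Hx; apply HK, Hl, Hx).
  enough (Hlist : (forall x, In x l -> B x) \/
                  exists X, F X /\ forall x, In x l -> union B X x).
  { destruct Hlist as [HB|[X [HX HBX]]]; [left|right; exists X; split; [exact HX|]];
      intros x Hx; apply Hl in Hx; auto; now apply HB. }
  clear K Hl HK; induction l as [|a l IH]; [left; intros x []|].
  assert (Hl : forall x, In x l -> union B (classical_sets.bigcup F (fun X => X)) x)
    by (intros x Hx; apply Hl'; right; exact Hx).
  destruct (IH Hl) as [Hll|[X [HX Hll]]];
    destruct (Hl' a (or_introl eq_refl)) as [Ha|[Y HY Ha]].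
  - left; intros x [<-|Hx]; auto.
  - right; exists Y; split; [exact HY|].
    intros x [<-|Hx]; [right; exact Ha|left; auto].
  - right; exists X; split; [exact HX|]. intros x [<-|Hx]; [left; exact Ha|auto].
  - right; destruct (HF X Y HX HY) as [HXY|HYX].
    + exists Y; split; [exact HY|].
      intros x [<-|Hx]; [right; exact Ha|destruct (Hll x Hx); [left|right]; auto].
    + exists X; split; [exact HX|].
      intros x [<-|Hx]; [right; auto|auto].
Qed.

End FiniteSets.

Section Consistency.
Context {L : Type} (bar : L -> lset L).

Lemma inconsistent_mono (D1 D2 : drel L) (X : lset L) :
  (forall G g, finite G -> D1 G g -> D2 G g) ->
  inconsistent D1 bar X -> inconsistent D2 bar X.
Proof.
  intros HD [Th [g [g' [HTh [HThX [Hg [Hg' Hd]]]]]]].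
  exists Th, g, g'; repeat split; auto.
  apply HD; [apply finite_minus1|]; assumption.
Qed.

Lemma consistent_antimono (D1 D2 : drel L) (X : lset L) :
  (forall G g, finite G -> D1 G g -> D2 G g) ->
  consistent D2 bar X -> consistent D1 bar X.
Proof. intros HD HX HX1; apply HX; eapply inconsistent_mono; eassumption. Qed.

Lemma consistent_sub (D : drel L) (X Y : lset L) :
  sub X Y -> consistent D bar Y -> consistent D bar X.
Proof.
  intros HXY HY [Th [g [g' [HTh [HThX H]]]]].
  apply HY; exists Th, g, g'; split; [exact HTh|split; [|exact H]].
  intros x Hx; apply HXY, HThX, Hx.
Qed.

Lemma consistent_finitary (D : drel L) (X : lset L) :
  (forall K, finite K -> sub K X -> consistent D bar K) -> consistent D bar X.
Proof.
  intros HX [Th [g [g' [HTh [HThX H]]]]].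
  apply (HX Th HTh HThX); exists Th, g, g'.
  split; [exact HTh|split; [intros x Hx; exact Hx|exact H]].
Qed.

(* Zorn is applied to the sets [X] with [E0 ∪ X] consistent rather than to the
   consistent supersets of [E0], so that the union of the empty chain qualifies. *)
Lemma ex_MCS_sup (D : drel L) (S E0 : lset L) :
  sub E0 S -> consistent D bar E0 -> exists E, MCS D bar S E /\ sub E0 E.
Proof.
  intros HE0S HE0.
  pose (P := fun X : lset L => sub X S /\ consistent D bar (union E0 X)).
  destruct (@classical_sets.Zorn_bigcup L P) as [A [[HAS HA] HAmax]].
  - intros F HFP HF; split.
    + intros x [X HX Hx]; exact (proj1 (HFP X HX) x Hx).
    + apply consistent_finitary; intros K HK HKsub.
      destruct (finite_sub_union_chain HF HK HKsub) as [HKE0|[X [HX HKX]]].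
      * exact (consistent_sub HKE0 HE0).
      * exact (consistent_sub HKX (proj2 (HFP X HX))).
  - assert (HE0A : sub E0 A).
    { intros x Hx; apply NNPP; intro HxA.
      apply (HAmax (union E0 A)).
      - split; [intros y Hy; right; exact Hy|intros HA'; exact (HxA (HA' x (or_introl Hx)))].
      - split; [intros y [Hy|Hy]; auto|].
        eapply consistent_sub; [|exact HA]. intros y [Hy|Hy]; [left|]; assumption. }
    exists A; split; [|exact HE0A].
    split; [exact HAS|split].
    + eapply consistent_sub; [|exact HA]; intros y Hy; right; exact Hy.
    + intros E' HAE' HE'S HE'; apply NNPP; intro HE'A.
      apply (HAmax E'); [split; assumption|split; [exact HE'S|]].
      eapply consistent_sub; [|exact HE']; intros y [Hy|Hy]; auto.
Qed.

End Consistency.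

Section PlusPhi.
Context {L : Type} (D : drel L) (bar : L -> lset L).

(* Cut turns a [|-^{+phi}]-derivation from [Th' \ {g}] into a [|-]-derivation
   from [Th ∪ (Th' \ {g})]; contraposition on [g] then removes [g] again if
   [Th] happened to contain it. *)
Lemma consistent_plus_phi (phi : L) (Th E : lset L) :
  contrapositable D bar -> Cut D -> finite Th -> D Th phi -> sub Th E ->
  consistent D bar E -> consistent (plus_phi D phi) bar E.
Proof.
  intros Hcp Hcut HTh Hphi HThE HE [Th' [g [g' [HTh' [HTh'E [Hg [Hg' Hd]]]]]]].
  pose (Theta := union Th (minus1 Th' g)).
  assert (HTheta : finite Theta)
    by (apply finite_union; [|apply finite_minus1]; assumption).
  assert (Hd' : D Theta g')
    by (apply Hcut with phi; [|apply finite_minus1|..]; assumption).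
  apply HE; exists (union Theta (single g)), g.
  assert (HK : finite (union Theta (single g)) /\ sub (union Theta (single g)) E
               /\ union Theta (single g) g).
  { split; [apply finite_union; [|apply finite_single]; assumption|].
    split; [|right; reflexivity].
    intros x [[Hx|[Hx _]]|Hx]; [auto|auto|].
    rewrite Hx; exact (HTh'E g Hg). }
  destruct (classic (Theta g)) as [HgTheta|HgTheta].
  - destruct (Hcp Theta g g' HTheta Hd' Hg' g HgTheta) as [s' [Hs' Hds']].
    exists s'; tauto.
  - exists g'; rewrite minus1_union_single by exact HgTheta; tauto.
Qed.

Lemma MCS_plus_phi (phi : L) (S Th E : lset L) :
  contrapositable D bar -> Cut D -> finite Th -> D Th phi -> sub Th E ->
  MCS D bar S E -> MCS (plus_phi D phi) bar S E.
Proof.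
  intros Hcp Hcut HTh Hphi HThE [HES [HE HEmax]].
  split; [exact HES|split].
  - exact (consistent_plus_phi Hcp Hcut HTh Hphi HThE HE).
  - intros E' HEE' HE'S HE'; apply HEmax; [assumption|assumption|].
    exact (consistent_antimono (@pp_base _ D phi) HE').
Qed.

End PlusPhi.

Lemma MCS_of_MCS_stronger {L : Type} (D1 D2 : drel L) (bar : L -> lset L) (S : lset L) :
  (forall G g, finite G -> D1 G g -> D2 G g) ->
  (forall E, MCS D1 bar S E -> MCS D2 bar S E) ->
  forall E, MCS D2 bar S E -> MCS D1 bar S E.
Proof.
  intros HD HMCS E [HES [HE HEmax]].
  split; [exact HES|split; [exact (consistent_antimono HD HE)|]].
  intros E' HEE' HE'S HE'.
  destruct (ex_MCS_sup HE'S HE') as [E'' [HE'' HE'E'']].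
  destruct (HMCS E'' HE'') as [HE''S [HE''cons _]].
  assert (HE''E : sub E'' E)
    by (apply HEmax; [intros x Hx; apply HE'E'', HEE', Hx|assumption..]).
  intros x Hx; apply HE''E, HE'E'', Hx.
Qed.

Theorem corollary3 (L : Type) (D : drel L) (bar : L -> lset L)
    (S : lset L) (phi : L) :
  contrapositable D bar ->
  Cut D ->
  (exists Th : lset L,
      finite Th /\ sub Th (capMCS D bar S) /\ D Th phi) ->
  forall x, capMCS D bar S x <-> capMCS (plus_phi D phi) bar S x.
Proof.
  intros Hcp Hcut [Th [HTh [HThcap Hphi]]].
  assert (Hto : forall E, MCS D bar S E -> MCS (plus_phi D phi) bar S E).
  { intros E HE; apply (MCS_plus_phi phi Hcp Hcut HTh Hphi); [|exact HE].
    intros x Hx; exact (HThcap x Hx E HE). }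
  pose proof (MCS_of_MCS_stronger (@pp_base _ D phi) Hto) as Hfrom.
  intro x; split; intros Hx E HE; apply Hx; auto.
Qed.
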